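(* Let $2\le k\le n-1$, let $v_1,\dots,v_n$ be a basis of $\mathbb{C}^n$, let $i\in\{2,\dots,k\}$, $j\in\{k+1,\dots,n\}$, $h\in\{2,\dots,n\}$, and $a,b\in\mathbb{C}\setminus\{0\}$, and set $$t=a\,v_1\wedge\dots\wedge v_{i-1}\wedge v_j\wedge v_{i+1}\wedge\dots\wedge v_k\otimes v_1+b\,(v_1\wedge\dots\wedge v_k\otimes v_h+v_h\wedge v_2\wedge\dots\wedge v_k\otimes v_1).$$ Then: (i) if $h\in\{2,\dots,k\}$ (so $v_h\in\langle v_2,\dots,v_k\rangle$ and $v_h,v_j$ are not proportional), $t$ has $(2,1^{k-1})$-rank $2$; (ii) if $h\in\{k+1,\dots,n\}$ and $h\neq j$, $t$ has $(2,1^{k-1})$-rank $3$; (iii) if $h=j$, $t$ has $(2,1^{k-1})$-rank $2$.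
   Context: $\mathbb{S}_{(2,1^{k-1})}\mathbb{C}^n\subset\bigwedge^k\mathbb{C}^n\otimes\mathbb{C}^n$ is the Schur module of the partition $(2,1,\dots,1)$ ($k$ parts), the image of the Young symmetrizer (row symmetrization then column antisymmetrization, tableau filled column by column). An element has $(2,1^{k-1})$-rank $1$ if it equals $w_1\wedge\dots\wedge w_k\otimes w_1$ with $w_1,\dots,w_k$ linearly independent; the $(2,1^{k-1})$-rank of $t$ is the least $r$ such that $t$ is a sum of $r$ such elements. *)

From HB Require Import structures.
From mathcomp Require Import all_boot all_order all_algebra.
From mathcomp Require Import reals.
From mathcomp Require Import complex.
Set Implicit Arguments. Unset Strict Implicit. Unset Printing Implicit Defensive.
Import Order.TTheory GRing.Theory Num.Theory.
Local Open Scope ring_scope.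

(* Elements of  /\^k C^n (x) C^n  are modelled inside (C^n)^{(x)(k+1)} by their
   coordinates in the standard basis: t x y is the coefficient of
   e_{x 0} (x) ... (x) e_{x (k-1)} (x) e_y.  The wedge w_1 /\ ... /\ w_k is the
   antisymmetric tensor  sum_s sgn(s) w_{s 1} (x) ... (x) w_{s k}. *)
Definition tensor (C : Type) (k n : nat) := ('I_k -> 'I_n) -> 'I_n -> C.

Definition wedge_tensor (C : comRingType) (k n : nat) (W : 'M[C]_(k, n))
  (x : 'rV[C]_n) : tensor C k n :=
  fun a y => \det (\matrix_(m < k, l < k) W l (a m)) * x 0 y.

Definition schur_rank_one (C : fieldType) (k n : nat) (t : tensor C k n) :=
  exists W : 'M[C]_(k, n), row_free W /\
    exists i0 : 'I_k, (i0 : nat) = 0%N /\ t = wedge_tensor W (row i0 W).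

Definition schur_rank_le (C : fieldType) (k n : nat) (r : nat) (t : tensor C k n) :=
  exists T : 'I_r -> tensor C k n, (forall s, schur_rank_one (T s)) /\
    t = fun a y => \sum_(s < r) T s a y.

Definition schur_rank (C : fieldType) (k n : nat) (t : tensor C k n) (r : nat) :=
  schur_rank_le r t /\ forall r', schur_rank_le r' t -> (r <= r')%N.

Definition rows_of (C : Type) (k n : nat) (V : 'M[C]_n) (g : 'I_k -> 'I_n)
  : 'M[C]_(k, n) := \matrix_(l < k, c < n) V (g l) c.

(* With v_p = row p V (0-based: v_1 of the paper is row 0),
   t = a v_1/\..v_{i-1}/\v_j/\v_{i+1}..v_k (x) v_1
     + b (v_1/\..../\v_k (x) v_h + v_h/\v_2/\../\v_k (x) v_1).
   Indices i j h are 0-based here ('I_n); insubd d l is l viewed in 'I_n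
   (l < k <= n so the default d is never used). *)
Definition thm_tensor (C : comRingType) (k n : nat) (V : 'M[C]_n)
  (i j h : 'I_n) (a b : C) : tensor C k n :=
  let v1 := row (insubd h 0%N) V in
  let vh := row h V in
  fun x y =>
    a * wedge_tensor (rows_of V (fun l : 'I_k =>
          if (l : nat) == (i : nat) then j else insubd j (l : nat))) v1 x y
  + b * (wedge_tensor (rows_of V (fun l : 'I_k => insubd j (l : nat))) vh x y
       + wedge_tensor (rows_of V (fun l : 'I_k =>
          if (l : nat) == 0%N then h else insubd j (l : nat))) v1 x y).

From HB Require Import structures.
From mathcomp Require Import all_boot all_order all_algebra all_fingroup.
From mathcomp Require Import reals complex boolp ring zify.
Import Order.TTheory GRing.Theory Num.Theory.
Local Open Scope ring_scope.
Set Implicit Arguments. Unset Strict Implicit. Unset Printing Implicit Defensive.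

(* Acting by [V^-1] on every tensor factor preserves (2,1^{k-1})-ranks, so we may
   take [V = 1] and compute with the coordinates of standard k-vectors.
   Upper bounds are explicit decompositions: [w1 /\ ... /\ wk (x) w1] is multilinear
   in the rows, so symmetrising [(e1 + s eh) /\ e2 /\ ... /\ ek (x) (e1 + s eh)] over
   [s = +-1] isolates [e1/\../\ek (x) eh + eh/\e2/\../\ek (x) e1]; when [h = j] a
   square root of [-1] lets two such terms absorb the [a]-summand as well.
   Lower bounds: a sum of at most one term [p (x) x] has vanishing [2 x 2] minors in
   the splitting [/\^k (x) C^n], while [t] has the minor [-ab].  For two terms
   [p1 (x) x1 + p2 (x) x2] in case (ii), Cramer's rule writes [p1], [p2] through the
   slices [t _ e1], [t _ eh]; the Pluecker relation satisfied by the decomposable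
   [p1], [p2] then forces the coefficient matrix of [x1], [x2] to be singular. *)

Section SetRow.
Variables (C : fieldType) (m n : nat).
Implicit Types (A : 'M[C]_(m, n)) (u : 'rV[C]_n).

Definition set_row A l u : 'M[C]_(m, n) :=
  \matrix_(l', c) (if l' == l then u 0 c else A l' c).

Lemma row_set_row A l u : row l (set_row A l u) = u.
Proof. by apply/rowP => c; rewrite !mxE eqxx. Qed.

Lemma row_set_row_neq A l l' u : l' != l -> row l' (set_row A l u) = row l' A.
Proof. by move=> nl; apply/rowP => c; rewrite !mxE (negbTE nl). Qed.

Lemma set_rowC A l1 l2 u1 u2 : l1 != l2 ->
  set_row (set_row A l1 u1) l2 u2 = set_row (set_row A l2 u2) l1 u1.
Proof.
move=> nl; apply/matrixP => x y; rewrite !mxE.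
by case: (x =P l2) => [->|//]; rewrite eq_sym (negbTE nl).
Qed.

Lemma set_row_id A l u v : set_row (set_row A l u) l v = set_row A l v.
Proof. by apply/matrixP => x y; rewrite !mxE; case: eqP. Qed.

Lemma set_row_row A l : set_row A l (row l A) = A.
Proof. by apply/matrixP => x y; rewrite !mxE; case: eqP => [->|]. Qed.

End SetRow.

Section Pluecker.
Variables (C : fieldType) (k : nat).
Implicit Types (A : 'M[C]_k) (u : 'rV[C]_k).

Lemma det_set_row A l u : \det (set_row A l u) = \sum_c u 0 c * cofactor A l c.
Proof.
rewrite (expand_det_row _ l); apply: eq_bigr => c _; rewrite mxE eqxx.
congr (_ * (_ * \det _)); apply/matrixP => x y.
by rewrite !mxE eq_sym (negbTE (neq_lift _ _)).
Qed.

Lemma det_set_row_adj A l u : \det (set_row A l u) = (u *m \adj A) 0 l.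
Proof. by rewrite det_set_row mxE; apply: eq_bigr => c _; rewrite mxE. Qed.

(* Expand [z] in the rows of [M x y] by Cramer's rule and apply the linear form
   [\det (M _ w)]. *)
Lemma det_pluecker A (p q : 'I_k) x y z w : p != q ->
  let M u v := set_row (set_row A q v) p u in
  \det (M x y) * \det (M z w) = \det (M z y) * \det (M x w) + \det (M x z) * \det (M y w).
Proof.
move=> npq M; set N := M x y.
have MC u v : M u v = set_row (set_row A p u) q v by rewrite /M set_rowC // eq_sym.
have rowNp : row p N = x by rewrite row_set_row.
have rowNq : row q N = y by rewrite row_set_row_neq ?row_set_row // eq_sym.
have cramer : \det N *: z = \sum_l (z *m \adj N) 0 l *: row l N.
  by rewrite -mulmx_sum_row -mulmxA mul_adj_mx mul_mx_scalar.
have coef l : (z *m \adj N) 0 l = \det (set_row N l z) by rewrite det_set_row_adj.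
have lin (f : 'I_k -> C) (r : 'I_k -> 'rV[C]_k) :
    \det (M (\sum_l f l *: r l) w) = \sum_l f l * \det (M (r l) w).
  rewrite [LHS]det_set_row; under eq_bigr do rewrite summxE big_distrl /=.
  rewrite exchange_big /=; apply: eq_bigr => l _; rewrite det_set_row big_distrr /=.
  by apply: eq_bigr => c _; rewrite !mxE mulrA.
have scal c u : \det (M (c *: u) w) = c * \det (M u w).
  rewrite /M !det_set_row big_distrr /=.
  by apply: eq_bigr => e _; rewrite mxE -mulrA.
have := congr1 (fun u => \det (M u w)) cramer; rewrite /= scal lin.
rewrite (bigD1 p) //= (bigD1 q) 1?eq_sym //= big1 ?addr0; last first.
  move=> l /andP[nlp nlq]; rewrite (@determinant_alternate _ _ _ p l) ?mulr0 1?eq_sym //.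
  by move=> c; rewrite /N /M !mxE eqxx (negbTE nlp) (negbTE nlq).
have Np : set_row N p z = M z y by rewrite /N /M set_row_id.
have Nq : set_row N q z = M x z by rewrite /N !MC set_row_id.
by rewrite !coef rowNp rowNq Np Nq.
Qed.

End Pluecker.

Section WedgeCoord.
Variables (C : fieldType) (k n : nat).
Implicit Types (W : 'M[C]_(k, n)) (al g : 'I_k -> 'I_n).

Definition wedge_coord W al : C := \det (\matrix_(m < k, l < k) W l (al m)).

Definition setf2 g (p q : 'I_k) (c d : 'I_n) (m : 'I_k) : 'I_n :=
  if m == p then c else if m == q then d else g m.

Lemma wedge_tensorE W x al y : wedge_tensor W x al y = wedge_coord W al * x 0 y.
Proof. by []. Qed.

Lemma wedge_coordE W al : wedge_coord W al = \det (\matrix_(l < k, m < k) W l (al m)).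
Proof. by rewrite /wedge_coord -det_tr; congr (\det _); apply/matrixP => x y; rewrite !mxE. Qed.

Lemma wedge_coord_set_rowD W l c1 c2 u v al :
  wedge_coord (set_row W l (c1 *: u + c2 *: v)) al =
  c1 * wedge_coord (set_row W l u) al + c2 * wedge_coord (set_row W l v) al.
Proof.
rewrite !wedge_coordE; apply: (@determinant_multilinear _ _ _ _ _ l).
- by apply/rowP => m; rewrite !mxE eqxx.
- by apply/matrixP => x y; rewrite !mxE eq_sym (negbTE (neq_lift _ _)).
- by apply/matrixP => x y; rewrite !mxE eq_sym (negbTE (neq_lift _ _)).
Qed.

Lemma wedge_coord_set_rowZ W l c u al :
  wedge_coord (set_row W l (c *: u)) al = c * wedge_coord (set_row W l u) al.
Proof.
by rewrite -[c *: u]addr0 -(scale0r u) wedge_coord_set_rowD mul0r addr0.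
Qed.

Lemma wedge_coord_eq_rows W l1 l2 al :
  l1 != l2 -> row l1 W = row l2 W -> wedge_coord W al = 0.
Proof.
move=> nl eqW; rewrite wedge_coordE (determinant_alternate nl) // => m.
by rewrite !mxE; have /rowP/(_ (al m)) := eqW; rewrite !mxE.
Qed.

Lemma wedge_coord_set_row_swap W l1 l2 u v al : l1 != l2 ->
  wedge_coord (set_row (set_row W l1 u) l2 v) al =
  - wedge_coord (set_row (set_row W l1 v) l2 u) al.
Proof.
move=> nl; pose D u v := wedge_coord (set_row (set_row W l1 u) l2 v) al.
have Dii w : D w w = 0.
  by rewrite /D (wedge_coord_eq_rows _ nl) // (row_set_row_neq _ _ nl) !row_set_row.
have Dlin1 w u' v' : D (1 *: u' + 1 *: v') w = D u' w + D v' w.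
  by rewrite /D !(set_rowC _ _ _ nl) wedge_coord_set_rowD !mul1r.
have Dlin2 w u' v' : D w (1 *: u' + 1 *: v') = D w u' + D w v'.
  by rewrite /D wedge_coord_set_rowD !mul1r.
have := Dii (1 *: u + 1 *: v); rewrite Dlin1 !Dlin2 !Dii add0r addr0.
by move/eqP; rewrite addr_eq0 => /eqP.
Qed.

Lemma row_free_wedge_coord W al : wedge_coord W al != 0 -> row_free W.
Proof.
move=> nz; pose S : 'M[C]_(n, k) := \matrix_(c, m) (c == al m)%:R.
have WS : (W *m S)^T = \matrix_(m, l) W l (al m).
  apply/matrixP => m l; rewrite !mxE (bigD1 (al m)) //= mxE eqxx mulr1 big1 ?addr0 //.
  by move=> c /negbTE ncl; rewrite mxE ncl mulr0.
have /mxrank_unit rankWS : W *m S \in unitmx by rewrite unitmxE -det_tr WS unitfE.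
by rewrite /row_free eqn_leq rank_leq_row -{1}rankWS mxrankM_maxl.
Qed.

Lemma wedge_coord_pluecker W (p q : 'I_k) g (x y z w : 'I_n) : p != q ->
  let D c d := wedge_coord W (setf2 g p q c d) in
  D x y * D z w = D z y * D x w + D x z * D y w.
Proof.
move=> npq D; pose col c := \row_(l < k) W l c.
pose M u v := set_row (set_row (\matrix_(m, l) W l (g m)) q v) p u.
have DM c d : D c d = \det (M (col c) (col d)).
  rewrite /D /wedge_coord /setf2; congr (\det _); apply/matrixP => m l; rewrite !mxE.
  by case: (m == p); case: (m == q); rewrite ?mxE.
by rewrite !DM; apply: det_pluecker.
Qed.

Lemma wedge_coord_mulmx W (D : 'M[C]_n) al :
  wedge_coord (W *m D) al =
  \sum_(a : {ffun 'I_k -> 'I_n}) wedge_coord W a * \prod_m D (a m) (al m).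
Proof.
rewrite /wedge_coord /determinant.
under eq_bigr => s _.
  under eq_bigr => m _ do rewrite !mxE.
  rewrite bigA_distr_bigA big_distrr /=.
  over.
rewrite exchange_big /=; apply: eq_bigr => f _.
rewrite big_distrl /=; apply: eq_bigr => s _.
rewrite -mulrA; congr (_ * _); rewrite -big_split /=.
by apply: eq_bigr => m _; rewrite !mxE.
Qed.

Lemma row_rows1 g l : row l (rows_of (1%:M : 'M[C]_n) g) = row (g l) 1%:M.
Proof. by apply/rowP => c; rewrite !mxE. Qed.

Lemma set_row_rows1 g l c :
  set_row (rows_of (1%:M : 'M[C]_n) g) l (row c 1%:M) =
  rows_of 1%:M (fun l' => if l' == l then c else g l').
Proof. by apply/matrixP => x y; rewrite !mxE; case: ifP; rewrite ?mxE. Qed.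

Lemma wedge_coord_rows1_eq0 g al m :
  (forall l, g l != al m) -> wedge_coord (rows_of (1%:M : 'M[C]_n) g) al = 0.
Proof.
move=> gal; rewrite /wedge_coord (expand_det_row _ m) big1 // => l _.
by rewrite !mxE (negbTE (gal l)) mulr0n mul0r.
Qed.

Lemma wedge_coord_rows1_perm g al (s : 'S_k) : injective g ->
  (forall m, al m = g (s m)) -> wedge_coord (rows_of (1%:M : 'M[C]_n) g) al = (-1) ^+ s.
Proof.
move=> inj_g alE; rewrite /wedge_coord -det_perm; congr (\det _).
by apply/matrixP => m l; rewrite !mxE alE (inj_eq inj_g) eq_sym.
Qed.

Lemma wedge_coord_rows1_id g :
  injective g -> wedge_coord (rows_of (1%:M : 'M[C]_n) g) g = 1.
Proof.
by move=> inj_g; rewrite (wedge_coord_rows1_perm (s := 1)) ?odd_perm1 // => m; rewrite perm1.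
Qed.

End WedgeCoord.

Section TensorMulmx.
Variables (C : fieldType) (k n : nat).
Implicit Types (t : tensor C k n) (D : 'M[C]_n).

(* [D] acting on each of the [k + 1] factors of [(C^n)^{(x)(k+1)}], on row vectors. *)
Definition tensor_mulmx t D : tensor C k n := fun al be =>
  \sum_(a : {ffun 'I_k -> 'I_n}) \sum_(y < n) t a y * (\prod_m D (a m) (al m) * D y be).

Lemma wedge_tensor_mulmx (W : 'M[C]_(k, n)) x D :
  tensor_mulmx (wedge_tensor W x) D = wedge_tensor (W *m D) (x *m D).
Proof.
apply: funext => al; apply: funext => be.
rewrite wedge_tensorE wedge_coord_mulmx big_distrl /=; apply: eq_bigr => a _.
rewrite mxE big_distrr /=; apply: eq_bigr => y _.
by rewrite wedge_tensorE; ring.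
Qed.

Lemma tensor_mulmxD t1 t2 D :
  tensor_mulmx (fun al be => t1 al be + t2 al be) D =
  fun al be => tensor_mulmx t1 D al be + tensor_mulmx t2 D al be.
Proof.
apply: funext => al; apply: funext => be; rewrite -big_split; apply: eq_bigr => a _.
by rewrite -big_split; apply: eq_bigr => y _; rewrite mulrDl.
Qed.

Lemma tensor_mulmxZ c t D :
  tensor_mulmx (fun al be => c * t al be) D = fun al be => c * tensor_mulmx t D al be.
Proof.
apply: funext => al; apply: funext => be; rewrite big_distrr; apply: eq_bigr => a _.
by rewrite big_distrr; apply: eq_bigr => y _; rewrite -mulrA.
Qed.

Lemma tensor_mulmx_sum r (T : 'I_r -> tensor C k n) D :
  tensor_mulmx (fun al be => \sum_(s < r) T s al be) D =
  fun al be => \sum_(s < r) tensor_mulmx (T s) D al be.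
Proof.
apply: funext => al; apply: funext => be; rewrite exchange_big; apply: eq_bigr => a _.
by rewrite exchange_big; apply: eq_bigr => y _; rewrite big_distrl.
Qed.

Lemma schur_rank_one_mulmx t D :
  D \in unitmx -> schur_rank_one t -> schur_rank_one (tensor_mulmx t D).
Proof.
move=> unitD [W [freeW [l0 [l00 ->]]]]; exists (W *m D); split.
  by rewrite /row_free mxrankMfree ?row_free_unit.
by exists l0; rewrite wedge_tensor_mulmx row_mul.
Qed.

Lemma schur_rank_le_mulmx r t D :
  D \in unitmx -> schur_rank_le r t -> schur_rank_le r (tensor_mulmx t D).
Proof.
move=> unitD [T [T1 ->]]; exists (fun s => tensor_mulmx (T s) D).
by split; [move=> s; apply: schur_rank_one_mulmx | rewrite tensor_mulmx_sum].
Qed.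

Lemma rows_of_mulmx (V : 'M[C]_n) (g : 'I_k -> 'I_n) D :
  rows_of V g *m D = rows_of (V *m D) g.
Proof. by apply/matrixP => x y; rewrite !mxE; apply: eq_bigr => c _; rewrite mxE. Qed.

Lemma thm_tensor_mulmx (V : 'M[C]_n) i j h a b D :
  tensor_mulmx (@thm_tensor C k n V i j h a b) D = @thm_tensor C k n (V *m D) i j h a b.
Proof.
rewrite /thm_tensor /= tensor_mulmxD !tensor_mulmxZ tensor_mulmxD.
by rewrite !wedge_tensor_mulmx -!row_mul !rows_of_mulmx.
Qed.

Lemma schur_rank_le_thm_tensor r (V : 'M[C]_n) i j h a b : V \in unitmx ->
  schur_rank_le r (@thm_tensor C k n V i j h a b) <->
  schur_rank_le r (@thm_tensor C k n 1%:M i j h a b).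
Proof.
move=> unitV; split=> /schur_rank_le_mulmx rank_le.
  by rewrite -(mulmxV unitV) -thm_tensor_mulmx; apply: rank_le; rewrite unitmx_inv.
by rewrite -[V]mul1mx -thm_tensor_mulmx; apply: rank_le.
Qed.

End TensorMulmx.

Section RankLowerBounds.
Variables (C : fieldType) (k n : nat).
Implicit Types (t : tensor C k n).

Lemma schur_rank_le_coord r t : schur_rank_le r t ->
  exists (W : 'I_r -> 'M[C]_(k, n)) (x : 'I_r -> 'rV[C]_n),
    forall al be, t al be = \sum_(s < r) wedge_coord (W s) al * x s 0 be.
Proof.
case=> T [T1 ->].
have /all_sig[Wx TWx] : forall s, {Wx : 'M[C]_(k, n) * 'rV[C]_n | T s = wedge_tensor Wx.1 Wx.2}.
  by move=> s; have /cid[W [_ /cid[l0 [_ TW]]]] := T1 s; exists (W, row l0 W).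
by exists (fun s => (Wx s).1), (fun s => (Wx s).2) => al be; apply: eq_bigr => s _; rewrite TWx.
Qed.

Lemma schur_rank_le1_minor r t al al' be be' : (r <= 1)%N -> schur_rank_le r t ->
  t al be * t al' be' = t al be' * t al' be.
Proof.
move=> r_le1 /schur_rank_le_coord[W [x tE]]; rewrite !tE.
case: r r_le1 W x {tE} => [|[|//]] _ W x; first by rewrite !big_ord0 !mul0r.
by rewrite !big_ord1; ring.
Qed.

(* If [t = p1 (x) x1 + p2 (x) x2] with a nonzero [2 x 2] minor in the columns [u, v],
   Cramer's rule writes [p1] and [p2] as combinations of [t _ u] and [t _ v]; the
   vanishing pattern of [t] then contradicts the Pluecker relation for [p1] and [p2]. *)
Lemma not_schur_rank_le2 t (p q : 'I_k) g (x y z w u v : 'I_n) : p != q ->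
  let A := setf2 g p q in
  t (A x y) u * t (A x z) v != t (A x y) v * t (A x z) u ->
  t (A z w) u = 0 -> t (A z w) v = 0 -> t (A z y) u = 0 -> t (A z y) v = 0 ->
  t (A x z) v = 0 -> t (A y w) v = 0 -> t (A x z) u != 0 -> t (A y w) u != 0 ->
  ~ schur_rank_le 2 t.
Proof.
move=> npq A minor_neq0 zwu zwv zyu zyv xzv ywv xzu ywu /schur_rank_le_coord[W [X tE]].
pose p1 := wedge_coord (W ord0); pose x1 := X ord0 0.
pose p2 := wedge_coord (W (lift ord0 ord0)); pose x2 := X (lift ord0 ord0) 0.
have {}tE al be : t al be = p1 al * x1 be + p2 al * x2 be.
  by rewrite tE big_ord_recl big_ord1.
pose De := x1 u * x2 v - x2 u * x1 v.
have p1E al : De * p1 al = x2 v * t al u - x2 u * t al v by rewrite /De !tE; ring.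
have p2E al : De * p2 al = x1 u * t al v - x1 v * t al u by rewrite /De !tE; ring.
have De_neq0 : De != 0.
  apply: contraNneq minor_neq0 => De0; apply/eqP/subr0_eq.
  have -> : t (A x y) u * t (A x z) v - t (A x y) v * t (A x z) u =
            De * (p1 (A x y) * p2 (A x z) - p2 (A x y) * p1 (A x z)) by rewrite /De !tE; ring.
  by rewrite De0 mul0r.
have vanish al : t al u = 0 -> t al v = 0 -> p1 al = 0 /\ p2 al = 0.
  move=> tu tv; move: (p1E al) (p2E al); rewrite tu tv !mulr0 subrr => /eqP + /eqP.
  by rewrite !mulf_eq0 (negbTE De_neq0) => /eqP -> /eqP ->.
have [p1zw p2zw] := vanish _ zwu zwv; have [p1zy p2zy] := vanish _ zyu zyv.
have pl1 : p1 (A x y) * p1 (A z w) = p1 (A z y) * p1 (A x w) + p1 (A x z) * p1 (A y w).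
  exact: wedge_coord_pluecker.
have pl2 : p2 (A x y) * p2 (A z w) = p2 (A z y) * p2 (A x w) + p2 (A x z) * p2 (A y w).
  exact: wedge_coord_pluecker.
rewrite p1zw p1zy mulr0 mul0r add0r in pl1; rewrite p2zw p2zy mulr0 mul0r add0r in pl2.
have x2v : x2 v = 0.
  have : (De * p1 (A x z)) * (De * p1 (A y w)) = 0 by rewrite mulrACA -pl1 mulr0.
  rewrite !p1E xzv ywv !mulr0 !subr0 => /eqP.
  by rewrite !mulf_eq0 (negbTE xzu) (negbTE ywu) !orbF orbb => /eqP.
have x1v : x1 v = 0.
  have : (De * p2 (A x z)) * (De * p2 (A y w)) = 0 by rewrite mulrACA -pl2 mulr0.
  rewrite !p2E xzv ywv !mulr0 !sub0r mulrNN => /eqP.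
  by rewrite !mulf_eq0 (negbTE xzu) (negbTE ywu) !orbF orbb => /eqP.
by move: De_neq0; rewrite /De x1v x2v !mulr0 subrr eqxx.
Qed.

End RankLowerBounds.

Section RankUpperBounds.
Variables (C : fieldType) (k n : nat).
Implicit Types (t : tensor C k n).

Lemma schur_rank_one_wedge (W : 'M[C]_(k, n)) (l0 : 'I_k) al :
  (l0 : nat) = 0%N -> wedge_coord W al != 0 -> schur_rank_one (wedge_tensor W (row l0 W)).
Proof. by move=> l00 /row_free_wedge_coord freeW; exists W; split=> //; exists l0. Qed.

Lemma schur_rank_le_one t : schur_rank_one t -> schur_rank_le 1 t.
Proof.
move=> t1; exists (fun=> t); split=> //.
by apply: funext => al; apply: funext => be; rewrite big_ord1.
Qed.

Lemma schur_rank_leS r t1 t2 : schur_rank_one t1 -> schur_rank_le r t2 ->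
  schur_rank_le r.+1 (fun al be => t1 al be + t2 al be).
Proof.
move=> one_t1 [T [oneT ->]].
exists (fun s => if unlift ord0 s is Some s' then T s' else t1); split.
  by move=> s; case: (unlift ord0 s).
apply: funext => al; apply: funext => be; rewrite big_ord_recl unlift_none.
by congr (_ + _); apply: eq_bigr => s _; rewrite liftK.
Qed.

End RankUpperBounds.

Section StandardBasis.
Variables (C : fieldType) (k n : nat) (i j h : 'I_n) (a b : C).
Hypotheses (i_gt0 : (0 < i)%N) (i_lt_k : (i < k)%N) (k_le_j : (k <= j)%N) (h_gt0 : (0 < h)%N).
Hypotheses (a_neq0 : a != 0) (b_neq0 : b != 0).

Let t := @thm_tensor C k n 1%:M i j h a b.

(* [e0] is [v1]; [pos0], [posi] are the positions of [v1], [vi] in [v1 /\ ... /\ vk];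
   [g0], [g1], [g2] index [v1/\../\vk], the same with [vi] replaced by [vj], and with
   [v1] replaced by [vh]. *)

Let k_gt0 : (0 < k)%N. Proof. exact: leq_ltn_trans i_lt_k. Qed.
Let pos0 : 'I_k := Ordinal k_gt0.
Let posi : 'I_k := Ordinal i_lt_k.
Let e0 : 'I_n := insubd h 0%N.
Let g0 (l : 'I_k) : 'I_n := insubd j (l : nat).
Let g1 (l : 'I_k) : 'I_n := if (l : nat) == (i : nat) then j else g0 l.
Let g2 (l : 'I_k) : 'I_n := if (l : nat) == 0%N then h else g0 l.
Local Notation A := (setf2 g0 pos0 posi).
Local Notation E g := (wedge_coord (rows_of (1%:M : 'M[C]_n) g)).
Local Notation eR c := (row c (1%:M : 'M[C]_n)).
Local Notation B0 := (rows_of (1%:M : 'M[C]_n) g0).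

Let eq_pos0 (m : 'I_k) : (m == pos0) = ((m : nat) == 0%N). Proof. by []. Qed.
Let eq_posi (m : 'I_k) : (m == posi) = ((m : nat) == i). Proof. by []. Qed.
Let val_e0 : val e0 = 0%N.
Proof. by rewrite val_insubd; case: ifP => //; have := ltn_ord h; lia. Qed.
Let val_g0 l : val (g0 l) = l.
Proof. by rewrite val_insubd; case: ifP => //; have := ltn_ord l; have := ltn_ord j; lia. Qed.
Let val_g1 l : val (g1 l) = if (l : nat) == (i : nat) then (j : nat) else l.
Proof. by rewrite /g1; case: ifP. Qed.
Let val_g2 l : val (g2 l) = if (l : nat) == 0%N then (h : nat) else l.
Proof. by rewrite /g2; case: ifP. Qed.
Let val_A c d m : val (A c d m) =
  if (m : nat) == 0%N then (c : nat) else if (m : nat) == (i : nat) then (d : nat) else m.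
Proof. by rewrite /setf2 eq_pos0 eq_posi; case: ifP => //; case: ifP. Qed.

Local Ltac ord_lia :=
  rewrite ?eq_pos0 ?eq_posi ?val_g0 ?val_g1 ?val_g2 ?val_A ?val_e0 /=;
  repeat case: ifP => /eqP; lia.
Local Ltac wedge0 pos :=
  apply: (@wedge_coord_rows1_eq0 C _ _ _ _ pos) => l; apply/eqP => /(congr1 val);
  have := ltn_ord l; ord_lia.

Let tE al be : t al be =
  a * E g1 al * (e0 == be)%:R + b * (E g0 al * (h == be)%:R + E g2 al * (e0 == be)%:R).
Proof. by rewrite /t /thm_tensor !wedge_tensorE !mxE mulrA. Qed.

Let h_neq_e0 : (h == e0) = false. Proof. by apply/eqP => /(congr1 val); ord_lia. Qed.

Let t_e0 al : t al e0 = a * E g1 al + b * E g2 al.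
Proof. by rewrite tE eqxx h_neq_e0 !mulr1 mulr0 add0r. Qed.

Let t_h al : t al h = b * E g0 al.
Proof. by rewrite tE eqxx eq_sym h_neq_e0 !mulr0 mulr1 addr0 add0r. Qed.

Let inj_g0 : injective g0.
Proof. by move=> x y /(congr1 val); rewrite !val_g0 => /val_inj. Qed.

Let inj_g1 : injective g1.
Proof.
move=> x y /(congr1 val) e; apply: val_inj; move: e.
by have := ltn_ord x; have := ltn_ord y; ord_lia.
Qed.

Let A_e0i : A e0 i = g0.
Proof. by apply: funext => m; apply: val_inj; have := ltn_ord m; ord_lia. Qed.

Let A_e0j : A e0 j = g1.
Proof. by apply: funext => m; apply: val_inj; have := ltn_ord m; ord_lia. Qed.

Let E1_g0 : E g1 g0 = 0. Proof. by wedge0 posi. Qed.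
Let E2_g0 : E g2 g0 = 0. Proof. by wedge0 pos0. Qed.

Let t_g0_e0 : t g0 e0 = 0.
Proof. by rewrite t_e0 E1_g0 E2_g0 !mulr0 addr0. Qed.

Let t_g0_h : t g0 h = b.
Proof. by rewrite t_h wedge_coord_rows1_id ?mulr1. Qed.

Let t_g1_e0 : t g1 e0 = a.
Proof.
have E2_g1 : E g2 g1 = 0 by wedge0 pos0.
by rewrite t_e0 wedge_coord_rows1_id // E2_g1 mulr1 mulr0 addr0.
Qed.

Let t_g1_h : t g1 h = 0.
Proof.
have E0_g1 : E g0 g1 = 0 by wedge0 posi.
by rewrite t_h E0_g1 mulr0.
Qed.

Lemma thm_tensor1_rank_ge2 r : schur_rank_le r t -> (2 <= r)%N.
Proof.
move=> rank_le; rewrite leqNgt; apply/negP => r_lt2.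
have := schur_rank_le1_minor g0 g1 e0 h r_lt2 rank_le.
rewrite t_g0_e0 t_g0_h t_g1_e0 t_g1_h mul0r => /esym/eqP.
by rewrite mulf_eq0 (negbTE a_neq0) (negbTE b_neq0).
Qed.

Let pos0_neq_posi : pos0 != posi.
Proof. by rewrite eq_posi /=; lia. Qed.

Let t_eq0 al : E g0 al = 0 -> E g1 al = 0 -> E g2 al = 0 -> t al e0 = 0 /\ t al h = 0.
Proof. by move=> E0 E1 E2; rewrite t_e0 t_h E0 E1 E2 !mulr0 addr0. Qed.

Let g0_pos0 : g0 pos0 = e0.
Proof. by apply: val_inj; rewrite val_g0 val_e0. Qed.

Let B0_fix (l : 'I_k) (c : 'I_n) : (c : nat) = l -> set_row B0 l (eR c) = B0.
Proof.
move=> cl; have -> : c = g0 l by apply: val_inj; rewrite val_g0.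
by rewrite -row_rows1 set_row_row.
Qed.

Local Notation wedge1 W := (wedge_tensor W (row pos0 W)).

Let wedge1_rank_one (W : 'M[C]_(k, n)) (al : 'I_k -> 'I_n) :
  wedge_coord W al != 0 -> schur_rank_one (wedge1 W).
Proof. exact: schur_rank_one_wedge. Qed.

Local Notation W0 := (set_row B0 posi (a *: eR j)).

Let wedge_coord_W0 al : wedge_coord W0 al = a * E g1 al.
Proof. by rewrite wedge_coord_set_rowZ set_row_rows1. Qed.

Let row_W0 : row pos0 W0 = eR e0.
Proof. by rewrite row_set_row_neq ?pos0_neq_posi // row_rows1 g0_pos0. Qed.

Let W0_rank_one : schur_rank_one (wedge1 W0).
Proof.
by apply: (wedge1_rank_one (al := g1)); rewrite wedge_coord_W0 wedge_coord_rows1_id // mulr1.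
Qed.

Section SmallH.
Hypothesis h_lt_k : (h < k)%N.

Let posh : 'I_k := Ordinal h_lt_k.

Let pos0_neq_posh : pos0 != posh.
Proof. by rewrite -val_eqE /=; lia. Qed.

Let E2_eq0 al : E g2 al = 0.
Proof.
apply: (wedge_coord_eq_rows _ pos0_neq_posh); rewrite !row_rows1; congr row.
by apply: val_inj; ord_lia.
Qed.

Lemma thm_tensor1_rank_le2_small_h : schur_rank_le 2 t.
Proof.
pose W1 := set_row (set_row B0 pos0 (eR h)) posh (- b *: eR e0).
have wW1 al : wedge_coord W1 al = b * E g0 al.
  rewrite wedge_coord_set_rowZ wedge_coord_set_row_swap // !B0_fix ?val_e0 //.
  by rewrite mulrNN.
have rW1 : row pos0 W1 = eR h by rewrite row_set_row_neq // row_set_row.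
have -> : t = fun al be => wedge1 W0 al be + wedge1 W1 al be.
  apply: funext => al; apply: funext => be.
  by rewrite tE !wedge_tensorE wedge_coord_W0 wW1 row_W0 rW1 E2_eq0 !mxE; ring.
apply: schur_rank_leS => //; apply: schur_rank_le_one.
by apply: (wedge1_rank_one (al := g0)); rewrite wW1 wedge_coord_rows1_id // mulr1.
Qed.

End SmallH.

Section LargeH.
Hypotheses (k_le_h : (k <= h)%N) (h_neq_j : h != j).

Let h_ne_j : (h : nat) <> j.
Proof. by move=> /val_inj e; move: h_neq_j; rewrite e eqxx. Qed.

Let inj_g2 : injective g2.
Proof.
move=> x y /(congr1 val) e; apply: val_inj; move: e.
by have := ltn_ord x; have := ltn_ord y; ord_lia.
Qed.

Let t_Aih_e0 : t (A i h) e0 = - b.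
Proof.
have E1_Aih : E g1 (A i h) = 0 by wedge0 posi.
have E2_Aih : E g2 (A i h) = -1.
  rewrite (@wedge_coord_rows1_perm C _ _ _ _ (tperm pos0 posi)) ?odd_tperm ?pos0_neq_posi //.
  by move=> m; apply: val_inj; case: tpermP => [->|->|/eqP + /eqP]; have := ltn_ord m; ord_lia.
by rewrite t_e0 E1_Aih E2_Aih mulr0 add0r mulrN1.
Qed.

Let t_Ajh : t (A j h) e0 = 0 /\ t (A j h) h = 0.
Proof. by apply: t_eq0; [wedge0 pos0 | wedge0 posi | wedge0 pos0]. Qed.

Let t_Aji : t (A j i) e0 = 0 /\ t (A j i) h = 0.
Proof. by apply: t_eq0; [wedge0 pos0 | wedge0 posi | wedge0 pos0]. Qed.

Lemma thm_tensor1_rank_ge3 r : schur_rank_le r t -> (3 <= r)%N.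
Proof.
move=> rank_le.
have := thm_tensor1_rank_ge2 rank_le; rewrite leq_eqVlt => /orP[/eqP r2|//].
exfalso; move: rank_le; rewrite -r2.
apply: (@not_schur_rank_le2 _ _ _ _ pos0 posi g0 e0 i j h e0 h).
- exact: pos0_neq_posi.
- by rewrite A_e0i A_e0j t_g0_e0 t_g0_h t_g1_e0 t_g1_h mul0r eq_sym mulf_neq0.
- exact: t_Ajh.1.
- exact: t_Ajh.2.
- exact: t_Aji.1.
- exact: t_Aji.2.
- by rewrite A_e0j t_g1_h.
- have E0_Aih : E g0 (A i h) = 0 by wedge0 posi.
  by rewrite t_h E0_Aih mulr0.
- by rewrite A_e0j t_g1_e0.
- by rewrite t_Aih_e0 oppr_eq0.
Qed.

Lemma thm_tensor1_rank_le3 : (2 : C) != 0 -> schur_rank_le 3 t.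
Proof.
move=> two_neq0.
pose W s r := set_row (set_row B0 pos0 (1 *: eR e0 + s *: eR h)) posi (r *: eR i).
have wW s r al : wedge_coord (W s r) al = r * (E g0 al + s * E g2 al).
  rewrite wedge_coord_set_rowZ set_rowC ?pos0_neq_posi // B0_fix //.
  by rewrite wedge_coord_set_rowD B0_fix ?val_e0 // set_row_rows1 mul1r.
have rW s r : row pos0 (W s r) = 1 *: eR e0 + s *: eR h.
  by rewrite row_set_row_neq ?pos0_neq_posi // row_set_row.
have W_rank_one s r : r != 0 -> schur_rank_one (wedge1 (W s r)).
  move=> r_neq0; apply: (wedge1_rank_one (al := g0)).
  by rewrite wW wedge_coord_rows1_id // E2_g0 mulr0 addr0 mulr1.
(* [(E0 + s E2) (x) (e0 + s eh)] is even in [s] except for [s (E0 (x) eh + E2 (x) e0)]. *)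
have -> : t = fun al be =>
    wedge1 W0 al be + (wedge1 (W 1 (b / 2)) al be + wedge1 (W (-1) (- (b / 2))) al be).
  apply: funext => al; apply: funext => be.
  by rewrite tE !wedge_tensorE wedge_coord_W0 row_W0 !wW !rW !mxE; field.
have b2_neq0 : b / 2 != 0 by rewrite mulf_neq0 ?invr_eq0.
apply: schur_rank_leS => //; apply: schur_rank_leS; last apply: schur_rank_le_one.
  exact: W_rank_one.
by apply: W_rank_one; rewrite oppr_eq0.
Qed.

End LargeH.

Section EqualHJ.
Hypothesis h_eq_j : h = j.

Lemma thm_tensor1_rank_le2_h_eq_j (I : C) :
  I * I = -1 -> (2 : C) != 0 -> schur_rank_le 2 t.
Proof.
move=> sqrI two_neq0.
pose W x y z := set_row (set_row B0 pos0 (x *: eR e0 + y *: eR j)) posi (1 *: eR i + z *: eR j).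
have B0_g2 : set_row B0 pos0 (eR j) = rows_of 1%:M g2 by rewrite set_row_rows1 -h_eq_j.
have wW x y z al : wedge_coord (W x y z) al = x * E g0 al + y * E g2 al + z * x * E g1 al.
  rewrite wedge_coord_set_rowD !(set_rowC _ _ _ pos0_neq_posi) (@B0_fix posi i) //.
  rewrite !wedge_coord_set_rowD (@B0_fix pos0 e0) ?val_e0 // B0_g2.
  rewrite (wedge_coord_eq_rows _ pos0_neq_posi (W := set_row _ pos0 (eR j))); last first.
    by rewrite row_set_row row_set_row_neq ?row_set_row // eq_sym.
  rewrite set_rowC ?(@B0_fix pos0 e0) ?val_e0 // 1?eq_sym // set_row_rows1.
  by rewrite mul1r mulr0 addr0 mulrA.
have rW x y z : row pos0 (W x y z) = x *: eR e0 + y *: eR j.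
  by rewrite row_set_row_neq ?pos0_neq_posi // row_set_row.
have W_rank_one x y z : x != 0 -> schur_rank_one (wedge1 (W x y z)).
  move=> x_neq0; apply: (wedge1_rank_one (al := g0)).
  by rewrite wW wedge_coord_rows1_id // E1_g0 E2_g0 !mulr0 !addr0 mulr1.
(* With [P = E0], [Q = (b E2 + a E1) / 2], [u = e0], [w = b ej / 2], the two terms are
   [(P + Q) (x) (u + w)] and [I^2 (P - Q) (x) (u - w)]; they sum to [2 (P (x) w + Q (x) u)]. *)
have -> : t = fun al be =>
    wedge1 (W 1 (b / 2) (a / 2)) al be + wedge1 (W I (- (I * (b / 2))) (- (a / 2))) al be.
  apply: funext => al; apply: funext => be.
  rewrite tE !wedge_tensorE !wW !rW !mxE -h_eq_j.
  by field: sqrI.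
apply: schur_rank_leS; last apply: schur_rank_le_one; apply: W_rank_one.
  exact: oner_neq0.
apply/eqP => I0; move/eqP: sqrI; rewrite I0 mul0r eq_sym oppr_eq0.
exact/negP/oner_neq0.
Qed.

End EqualHJ.

End StandardBasis.

Unset Implicit Arguments.
Local Open Scope complex_scope.

Theorem mainTheorem13 (R : realType) (n k : nat)
  (hk2 : (2 <= k)%N) (hkn : (k <= n - 1)%N)
  (V : 'M[R[i]]_n) (hV : V \in unitmx)
  (i j h : 'I_n) (hi : (1 <= i < k)%N) (hj : (k <= j)%N) (hh : (1 <= h)%N)
  (a b : R[i]) (ha : a != 0) (hb : b != 0) :
  let t := @thm_tensor _ k n V i j h a b in
  ((h < k)%N -> schur_rank t 2) /\
  ((k <= h)%N -> h != j -> schur_rank t 3) /\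
  (h = j -> schur_rank t 2).
Proof.
(* [hk2] and [hkn] follow from [hi] and [hj]. *)
move=> t; case/andP: hi => i_gt0 i_lt_k.
have rank_t r : schur_rank_le r t <-> schur_rank_le r (@thm_tensor _ k n 1%:M i j h a b).
  exact: schur_rank_le_thm_tensor.
have two_neq0 : (2 : R[i]) != 0 by rewrite pnatr_eq0.
have sqr_i : 'i * 'i = -1 :> R[i] by rewrite -expr2 sqr_i.
have ge2 r : schur_rank_le r t -> (2 <= r)%N.
  by move/rank_t; apply: thm_tensor1_rank_ge2.
split; [|split].
- move=> h_lt_k; split=> //; apply/rank_t; exact: thm_tensor1_rank_le2_small_h.
- move=> k_le_h h_neq_j; split; first by apply/rank_t; apply: thm_tensor1_rank_le3.
  by move=> r /rank_t; apply: thm_tensor1_rank_ge3.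
- move=> h_eq_j; split=> //; apply/rank_t.
  exact: thm_tensor1_rank_le2_h_eq_j sqr_i _.
Qed.
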